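(* Let $E$ be a Fréchet space, let $(B_n)_{n\in\mathbb{N}}$ fix the topology in $E$ and $G:=\operatorname{span}(\bigcup_{n\in\mathbb{N}}B_n)$. Let $(T^{E}_{m},T^{\mathbb{K}}_{m})_{m\in\mathcal{M}}$ be a defining family for $(\mathcal{FV},E)$ and a strong, consistent family for $(\mathcal{FW},E)$, where $\mathcal{FV}(\Omega)$ is a Banach space with $\mathcal{V}=(\nu_{1,1,m})_{m\in M_1}$ whose closed unit ball $B_{\mathcal{FV}(\Omega)}$ is a compact subset of $\mathcal{FW}(\Omega)$, and let $U$ be a set of uniqueness for $\mathcal{FV}(\Omega)$. Then the map \[ R_{U,G}\colon S\bigl(\{u\in\mathcal{FW}(\Omega)\varepsilon E\;|\;u(B_{\mathcal{FV}(\Omega)}^{\circ\mathcal{FW}(\Omega)'})\text{ is bounded in }E\}\bigr)\to\mathcal{FV}_G(U,E)_{sb},\quad f\mapsto(T^E_m(f)(x))_{(m,x)\in U}, \] is surjective.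
   Context: $\mathbb{K}\in\{\mathbb{R},\mathbb{C}\}$; $E$ has a directed fundamental system of seminorms $(p_\alpha)_{\alpha\in\mathfrak{A}}$ (for $E=\mathbb{K}$: $\{|\cdot|\}$), dual $E'$, $E'_b$ with the strong topology. An increasing sequence $(B_n)_{n\in\mathbb{N}}$ of bounded subsets of $E'_b$ fixes the topology in $E$ if the polars $(B_n^\circ)_{n\in\mathbb{N}}$ form a fundamental system of zero neighbourhoods of $E$. Weighted function spaces: given non-empty sets $\Omega,J,L$, non-empty sets $(M_l)_{l\in L}$ and a family $\mathcal{V}=((\nu_{j,l,m})_{m\in M_l})_{j\in J,l\in L}$ of functions $\nu_{j,l,m}\colon\Omega\to[0,\infty)$ such that for all $x$, $l$ there is $j$ with $\nu_{j,l,m}(x)>0$ for all $m\in M_l$; $\mathcal{M}_{\mathrm{top}}:=\bigcup_lM_l$, sets $\mathcal{M}_0,\mathcal{M}_r$, the three pairwise disjoint, $\mathcal{M}$ their union; non-empty sets $(\omega_m)_{m\in\mathcal{M}}$ with $\Omega\subset\omega_m$ for $m\in\mathcal{M}_{\mathrm{top}}$; for $F\in\{E,\mathbb{K}\}$ linear maps $T^F_m\colon\operatorname{dom}T^F_m\subset F^\Omega\to F^{\omega_m}$. $\mathcal{FV}(\Omega,F)$ is the set of $f\in\bigcap_{m\in\mathcal{M}}\operatorname{dom}T^F_m\cap\bigcap_{m\in\mathcal{M}_0}\ker T^F_m$ with $|f|_{j,l,\alpha}:=\sup_{x\in\Omega,m\in M_l}p_\alpha(T^F_m(f)(x))\nu_{j,l,m}(x)<\infty$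 for all $j,l,\alpha$, with these seminorms; $\mathcal{FV}(\Omega):=\mathcal{FV}(\Omega,\mathbb{K})$; $T^F_{m,x}(f):=T^F_m(f)(x)$. A dom-space: seminorms directed and, in the scalar case, point evaluations $\delta_x$ continuous. If $\mathcal{FV}(\Omega)$, $\mathcal{FV}(\Omega,E)$ are dom-spaces built from the same data with operators $T^{\mathbb{K}}_m$ resp. $T^E_m$, $(T^E_m,T^{\mathbb{K}}_m)_{m\in\mathcal{M}}$ is a defining family for $(\mathcal{FV},E)$. $\mathcal{FW}(\Omega)$, $\mathcal{FW}(\Omega,E)$ are spaces of the same type built from the same $\Omega$, $\mathcal{M}$, $\omega_m$ and operators but another family of weights $\mathcal{W}$. $\mathcal{FW}(\Omega)\varepsilon E$: continuous linear maps $\mathcal{FW}(\Omega)'_\kappa\to E$ ($\kappa$: uniform convergence on absolutely convex compact sets), $S(u)(x):=u(\delta_x)$. Consistent for $(\mathcal{FW},E)$: for all $u\in\mathcal{FW}(\Omega)\varepsilon E$, $m\in\mathcal{M}$, $x\in\omega_m$: $S(u)\in\operatorname{dom}T^E_m$, $T^{\mathbb{K}}_{m,x}|_{\mathcal{FW}(\Omega)}\in\mathcal{FW}(\Omega)'$ and $T^E_m(S(u))(x)=u(T^{\mathbb{K}}_{m,x})$; strong for $(\mathcal{FW},E)$: for all $e'\in E'$, $f\in\mathcal{FW}(\Omega,E)$, $m$: $e'\circ f\in\operatorname{dom}T^{\mathbb{K}}_m$ and $T^{\mathbb{K}}_m(e'\circ f)=e'\circ T^E_m(f)$ on $\omega_m$.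 $B_{\mathcal{FV}(\Omega)}^{\circ\mathcal{FW}(\Omega)'}:=\{y'\in\mathcal{FW}(\Omega)':|y'(z)|\le1\ \forall z\in B_{\mathcal{FV}(\Omega)}\}$. $\mathcal{V}=(\nu_{1,1,m})_{m\in M_1}$ means $J=L=\{1\}$. $U\subset\bigcup_m\{m\}\times\omega_m$ is a set of uniqueness for $\mathcal{FV}(\Omega)$ if $T^{\mathbb{K}}_{m,x}\in\mathcal{FV}(\Omega)'$ for $(m,x)\in U$ and $f\in\mathcal{FV}(\Omega)$ with $T^{\mathbb{K}}_m(f)(x)=0$ for all $(m,x)\in U$ is $0$. $\mathcal{FV}_G(U,E)$ is the set of $f\colon U\to E$ such that for each $e'\in G$ there is a (unique) $f_{e'}\in\mathcal{FV}(\Omega)$ with $T^{\mathbb{K}}_m(f_{e'})(x)=e'(f(m,x))$ for all $(m,x)\in U$; $\mathcal{FV}_G(U,E)_{sb}$ is the set of such $f$ for which $\{f_{e'}:e'\in B_n\}$ is bounded in $\mathcal{FV}(\Omega)$ for every $n\in\mathbb{N}$. Under the hypotheses $R_{U,G}$ takes values in $\mathcal{FV}_G(U,E)_{sb}$. *)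

(* All locally convex notions are written out
   explicitly through (families of) seminorms, in "sup <= eps" form. *)
From mathcomp Require Import all_boot all_order all_algebra.
From mathcomp Require Import reals complex.
From mathcomp Require Import classical_sets.
From Stdlib Require List.
Set Implicit Arguments.
Unset Strict Implicit.
Unset Printing Implicit Defensive.
Import Order.TTheory GRing.Theory Num.Theory.
Local Open Scope ring_scope.
Local Open Scope classical_set_scope.

Definition Kfield (R : realType) (b : bool) : numFieldType :=
  if b then (R : numFieldType) else (R[i] : numFieldType).

Section LCS.
Variable K : numFieldType.

Variables (E : lmodType K) (A : Type) (p : A -> E -> K).

Definition is_seminorm (q : E -> K) : Prop :=
  [/\ forall x, 0 <= q x,
      forall x y, q (x + y) <= q x + q y &
      forall (k : K) x, q (k *: x) = `|k| * q x].

Definition directed_seminorms : Prop :=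
  forall a b : A, exists (c : A) (C : K), 0 < C /\
    forall x, p a x <= C * p c x /\ p b x <= C * p c x.

(* Frechet space: Hausdorff, metrizable (countable fundamental subsystem),
   (sequentially) complete locally convex space *)
Definition frechet : Prop :=
  [/\ forall a, is_seminorm (p a),
      directed_seminorms,
      forall x, (forall a, p a x = 0) -> x = 0,
      exists s : nat -> A, forall a, exists (n : nat) (C : K),
          forall x, p a x <= C * p (s n) x &
      forall u : nat -> E,
        (forall a (e : K), 0 < e -> exists N : nat, forall n k : nat,
            (N <= n)%N -> (N <= k)%N -> p a (u n - u k) <= e) ->
        exists l : E, forall a (e : K), 0 < e -> exists N : nat,
            forall n : nat, (N <= n)%N -> p a (u n - l) <= e].

Definition in_dual (e : E -> K) : Prop :=
  (forall (k : K) x y, e (k *: x + y) = k * e x + e y) /\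
  exists (a : A) (C : K), forall x, `|e x| <= C * p a x.

Definition bounded_in_E (D : set E) : Prop :=
  forall a, exists C : K, forall x, D x -> p a x <= C.

(* bounded subsets of E'_b (strong topology: uniform convergence on bounded sets) *)
Definition bounded_in_Eb (B : set (E -> K)) : Prop :=
  B `<=` in_dual /\
  forall D : set E, bounded_in_E D ->
    exists C : K, forall e x, B e -> D x -> `|e x| <= C.

Definition polarE (B : set (E -> K)) : set E :=
  [set x | forall e, B e -> `|e x| <= 1].

Definition fixes_topology (B : nat -> set (E -> K)) : Prop :=
  [/\ forall n, B n `<=` B n.+1,
      forall n, bounded_in_Eb (B n),
      forall n, exists (a : A) (e : K), 0 < e /\
          [set x | p a x <= e] `<=` polarE (B n) &
      forall a (e : K), 0 < e -> exists n, polarE (B n) `<=` [set x | p a x <= e]].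

Definition span_union (B : nat -> set (E -> K)) : set (E -> K) :=
  [set e | exists s : seq (K * (E -> K)),
     (forall c, List.In c s -> exists n, B n c.2) /\
     e = (fun x => \sum_(c <- s) c.1 * c.2 x)].

End LCS.

Section Weighted.
Variable K : numFieldType.
(* Omega, the index set \mathcal{M} (as a type), the sets omega_m (as types)
   and the inclusions Omega \subset omega_m (used for m in M_top only). *)
Variables (Om M : Type) (om : M -> Type) (emb : forall m, Om -> om m).

Section Space.
(* F = E or F = K; seminorms q i on F, i : I *)
Variables (F : lmodType K) (I : Type) (q : I -> F -> K).
Variables (dom : M -> set (Om -> F)) (T : forall m, (Om -> F) -> om m -> F).
Variables (J L : Type) (Ml : L -> set M) (M0 : set M) (nu : J -> L -> M -> Om -> K).

Definition lincomb (k : K) (f g : Om -> F) : Om -> F := fun x => k *: f x + g x.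

Definition linear_ops : Prop :=
  forall m, dom m (fun _ => 0) /\
    forall (k : K) f g, dom m f -> dom m g ->
      dom m (lincomb k f g) /\
      @T m (lincomb k f g) = (fun y => k *: @T m f y + @T m g y).

Definition wsn_le (j : J) (l : L) (i : I) (f : Om -> F) (e : K) : Prop :=
  forall m x, Ml l m -> q i (@T m f (emb m x)) * nu j l m x <= e.

Definition FVsp : set (Om -> F) :=
  [set f | [/\ forall m, dom m f,
              forall m, M0 m -> forall y, @T m f y = 0 &
              forall j l i, exists C : K, wsn_le j l i f C]].

Definition wsn_directed : Prop :=
  forall (j1 : J) (l1 : L) (i1 : I) (j2 : J) (l2 : L) (i2 : I),
  exists (j3 : J) (l3 : L) (i3 : I) (C : K), 0 < C /\
    forall f e, FVsp f -> wsn_le j3 l3 i3 f e ->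
      wsn_le j1 l1 i1 f (C * e) /\ wsn_le j2 l2 i2 f (C * e).
End Space.

Arguments linear_ops : clear implicits.

Definition weights_ok (J L : Type) (Ml : L -> set M) (M0 : set M)
    (nu : J -> L -> M -> Om -> K) : Prop :=
  [/\ inhabited J /\ inhabited L,
      forall l, exists m, Ml l m,
      forall j l m x, Ml l m -> 0 <= nu j l m x,
      forall x l, exists j, forall m, Ml l m -> 0 < nu j l m x &
      forall l m, Ml l m -> ~ M0 m /\ injective (emb m)].

Definition absK (_ : unit) (k : K^o) : K := `|k|.

Section Scalar.
Variables (domK : M -> set (Om -> K^o)) (TK : forall m, (Om -> K^o) -> om m -> K^o).
Variables (J L : Type) (Ml : L -> set M) (M0 : set M) (nu : J -> L -> M -> Om -> K).

Definition FVs : set (Om -> K^o) := FVsp absK domK TK Ml M0 nu.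
Definition sle (j : J) (l : L) (f : Om -> K^o) (e : K) : Prop :=
  wsn_le absK TK Ml nu j l tt f e.

Definition in_FVdual (y : (Om -> K^o) -> K) : Prop :=
  (forall (k : K) f g, FVs f -> FVs g -> y (lincomb k f g) = k * y f + y g) /\
  exists (j : J) (l : L) (d : K), 0 < d /\
    forall f, FVs f -> sle j l f d -> `|y f| <= 1.

Definition dom_space_K : Prop :=
  wsn_directed absK domK TK Ml M0 nu /\
  forall x : Om, in_FVdual (fun f => f x).

Definition open_FV (O : set (Om -> K^o)) : Prop :=
  O `<=` FVs /\
  forall f, O f -> exists (j : J) (l : L) (d : K), 0 < d /\
    forall g, FVs g -> sle j l (fun x => g x - f x) d -> O g.

Definition compact_FV (C : set (Om -> K^o)) : Prop :=
  C `<=` FVs /\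
  forall Os : set (set (Om -> K^o)), (forall O, Os O -> open_FV O) ->
    C `<=` \bigcup_(O in Os) O ->
    exists s : seq (set (Om -> K^o)),
      (forall O, List.In O s -> Os O) /\
      forall f, C f -> exists O, List.In O s /\ O f.

Definition absconvex (C : set (Om -> K^o)) : Prop :=
  forall (a b : K) f g, `|a| + `|b| <= 1 -> C f -> C g ->
    C (fun x => a * f x + b * g x).

Definition banach_FV (jn : J) (ln : L) : Prop :=
  (forall f, FVs f -> (forall e : K, 0 < e -> sle jn ln f e) -> f = (fun _ => 0)) /\
  forall u : nat -> (Om -> K^o), (forall n, FVs (u n)) ->
    (forall e : K, 0 < e -> exists N : nat, forall n k : nat,
        (N <= n)%N -> (N <= k)%N -> sle jn ln (fun x => u n x - u k x) e) ->
    exists f, FVs f /\ forall e : K, 0 < e -> exists N : nat,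
        forall n : nat, (N <= n)%N -> sle jn ln (fun x => u n x - f x) e.

Definition uniqueness_set (U : set {m : M & om m}) : Prop :=
  (forall m (x : om m), U (existT _ m x) -> in_FVdual (fun f => @TK m f x)) /\
  forall f, FVs f -> (forall m (x : om m), U (existT _ m x) -> @TK m f x = 0) ->
    f = (fun _ => 0).

Variables (E : lmodType K) (A : Type) (p : A -> E -> K).

(* u : FV(Omega)'_kappa -> E linear and continuous; kappa = topology of
   uniform convergence on absolutely convex compact subsets of FV(Omega) *)
Definition eps_prod (u : ((Om -> K^o) -> K) -> E) : Prop :=
  (forall (k : K) y1 y2, in_FVdual y1 -> in_FVdual y2 ->
     u (fun f => k * y1 f + y2 f) = k *: u y1 + u y2) /\
  forall a : A, exists C : set (Om -> K^o),
    [/\ compact_FV C, absconvex C &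
        forall y, in_FVdual y -> (forall f, C f -> `|y f| <= 1) -> p a (u y) <= 1].

Definition Smap (u : ((Om -> K^o) -> K) -> E) : Om -> E := fun x => u (fun f => f x).

End Scalar.

Arguments FVs : clear implicits.
Arguments in_FVdual : clear implicits.
Arguments dom_space_K : clear implicits.
Arguments compact_FV : clear implicits.
Arguments banach_FV : clear implicits.
Arguments uniqueness_set : clear implicits.
Arguments eps_prod : clear implicits.


End Weighted.

Section Corollary.
Variable K : numFieldType.
Variables (Om M : Type) (om : M -> Type) (emb : forall m, Om -> om m).
Variables (E : lmodType K) (A : Type) (p : A -> E -> K).
Variables (domE : M -> set (Om -> E)) (TE : forall m, (Om -> E) -> om m -> E).
Variables (domK : M -> set (Om -> K^o)) (TK : forall m, (Om -> K^o) -> om m -> K^o).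

Definition consistent_for (J L : Type) (Ml : L -> set M) (M0 : set M)
    (nu : J -> L -> M -> Om -> K) : Prop :=
  forall u, eps_prod emb domK TK Ml M0 nu p u ->
    forall m (x : om m),
      [/\ domE m (Smap u),
          in_FVdual emb domK TK Ml M0 nu (fun f => @TK m f x) &
          @TE m (Smap u) x = u (fun f => @TK m f x)].

Definition strong_for (J L : Type) (Ml : L -> set M) (M0 : set M)
    (nu : J -> L -> M -> Om -> K) : Prop :=
  forall e, in_dual p e ->
  forall f, FVsp emb p domE TE Ml M0 nu f ->
  forall m, domK m (fun x => e (f x) : K^o) /\
    forall y : om m, @TK m (fun x => e (f x) : K^o) y = e (@TE m f y).

(* FV(Omega) with V = (nu_{1,1,m})_{m in M_1}, i.e. J = L = unit, M_1 = MV *)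
Variables (MV M0V : set M) (nuV : M -> Om -> K).
Definition FV1 : set (Om -> K^o) :=
  FVs emb domK TK (fun _ : unit => MV) M0V (fun _ _ : unit => nuV).
Definition normV_le (f : Om -> K^o) (e : K) : Prop :=
  sle emb TK (fun _ : unit => MV) (fun _ _ : unit => nuV) tt tt f e.
Definition ballV : set (Om -> K^o) := [set f | FV1 f /\ normV_le f 1].

Definition polar_ballV (J L : Type) (Ml : L -> set M) (M0 : set M)
    (nu : J -> L -> M -> Om -> K) : set ((Om -> K^o) -> K) :=
  [set y | in_FVdual emb domK TK Ml M0 nu y /\ forall f, ballV f -> `|y f| <= 1].

(* FV_G(U, E)_{sb}; functions on U are represented as functions on the
   sigma type sum_m om m of which only the values on U matter *)
Definition FVG_sb (U : set {m : M & om m}) (G : set (E -> K))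
    (B : nat -> set (E -> K)) (g : {m : M & om m} -> E) : Prop :=
  (forall e, G e -> exists f, FV1 f /\
     forall m (x : om m), U (existT _ m x) -> @TK m f x = e (g (existT _ m x))) /\
  forall n : nat, exists C : K, forall e f, B n e -> FV1 f ->
     (forall m (x : om m), U (existT _ m x) -> @TK m f x = e (g (existT _ m x))) ->
     normV_le f C.
End Corollary.

(* For y in FW(Omega)' the vector u(y) of E is determined by e(u(y)) = y(f_e) for
   e in the union of the B_n, where f_e in FV(Omega) interpolates e o g on U.
   To construct it, y is approximated uniformly on the unit ball of FV(Omega) by
   finite combinations of the functionals T_{m,x}, (m,x) in U: since the ball is
   compact in FW(Omega) and U is a set of uniqueness, y is small on the part of
   the ball annihilated by finitely many T_{m,x}, and Hahn-Banach in finite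
   codimension (applied to real parts) turns this into such a combination.
   Replacing each T_{m,x} by g(m,x) yields a Cauchy sequence in E, as the f_e,
   e in B_n, are uniformly bounded and (B_n) fixes the topology; its limit is
   u(y).  The same bound shows that u is bounded on the polar of the ball and
   continuous for the topology of uniform convergence on a multiple of it. *)

From mathcomp Require Import all_boot all_order all_algebra.
From mathcomp Require Import reals complex.
From mathcomp Require Import classical_sets boolp.
From mathcomp Require Import ring lra.

Set Implicit Arguments.
Unset Strict Implicit.
Unset Printing Implicit Defensive.
Import Order.TTheory GRing.Theory Num.Theory.
Local Open Scope ring_scope.
Local Open Scope classical_set_scope.

(* The complex case of Hahn-Banach is reduced to the real one through [re];
   [iu] is the imaginary unit when K = C. *)
Record real_structure (R : realType) (K : numFieldType) := RealStructure {
  ofR : {rmorphism R -> K};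
  re : K -> R;
  iu : K;
  ler_ofR : forall r s, (ofR r <= ofR s) = (r <= s);
  reD : forall z w, re (z + w) = re z + re w;
  reZ : forall r z, re (ofR r * z) = r * re z;
  re1 : re 1 = 1;
  ofR_re : forall z, z \is Num.real -> ofR (re z) = z;
  re_le_norm : forall z, re z <= re `|z|;
  re_iu_eq0 : forall z, re z = 0 -> re (iu * z) = 0 -> z = 0 }.

Section RealStructureTheory.
Context {R : realType} {K : numFieldType} (k : real_structure R K).
Local Notation ofR := (ofR k).
Local Notation re := (re k).

Lemma ltr_ofR r s : (ofR r < ofR s) = (r < s).
Proof. by rewrite !lt_def (ler_ofR k) (inj_eq (fmorph_inj _)). Qed.

Lemma ofR_ge0 r : (0 <= ofR r) = (0 <= r).
Proof. by rewrite -(rmorph0 ofR) ler_ofR. Qed.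

Lemma normr_ofR r : `|ofR r| = ofR `|r|.
Proof.
have [r0|r0] := lerP 0 r; first by rewrite !ger0_norm ?ofR_ge0.
by rewrite !ltr0_norm ?rmorphN // -(rmorph0 ofR) ltr_ofR.
Qed.

Lemma re_ofR r : re (ofR r) = r.
Proof. by rewrite -[ofR r]mulr1 reZ re1 mulr1. Qed.

Lemma re0 : re 0 = 0.
Proof. by rewrite -(rmorph0 ofR) re_ofR. Qed.

Lemma reN z : re (- z) = - re z.
Proof. by apply/eqP; rewrite -subr_eq0 opprK -reD addNr re0. Qed.

Lemma reB z w : re (z - w) = re z - re w.
Proof. by rewrite reD reN. Qed.

Lemma re_sum (I : Type) (s : seq I) (F : I -> K) :
  re (\sum_(i <- s) F i) = \sum_(i <- s) re (F i).
Proof. by elim: s => [|i s IH]; rewrite ?big_nil ?re0 // !big_cons reD IH. Qed.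

Lemma real_ler_ofR x r : x \is Num.real -> (x <= ofR r) = (re x <= r).
Proof. by move=> xR; rewrite -{1}(ofR_re k xR) ler_ofR. Qed.

Lemma real_ofR_ler x r : x \is Num.real -> (ofR r <= x) = (r <= re x).
Proof. by move=> xR; rewrite -{1}(ofR_re k xR) ler_ofR. Qed.

Lemma re_ge0 (x : K) : 0 <= x -> 0 <= re x.
Proof. by move=> x0; rewrite -(real_ofR_ler _ (ger0_real x0)) rmorph0. Qed.

Lemma ler_re (x y : K) : x \is Num.real -> y \is Num.real -> x <= y -> re x <= re y.
Proof. by move=> xR yR; rewrite -(real_ler_ofR _ xR) (ofR_re k yR). Qed.

Lemma archi_bound_K (x : K) : 0 <= x -> exists n : nat, x < n%:R.
Proof.
move=> x0; exists (Num.bound (re x)).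
rewrite -(rmorph_nat ofR) -(ofR_re k (ger0_real x0)) ltr_ofR re_ofR.
by rewrite archi_boundP // re_ge0.
Qed.

Lemma inv_succ_small (c eta : K) : 0 < c -> 0 < eta ->
  exists N, forall n, (N <= n)%N -> c / n.+1%:R <= eta.
Proof.
move=> c0 eta0; have [N cN] := archi_bound_K (ltW (divr_gt0 c0 eta0)).
exists N => n Nn; rewrite ler_pdivrMr ?ltr0Sn // mulrC -ler_pdivrMr //.
by apply/ltW/(lt_le_trans cN); rewrite ler_nat; apply: leqW.
Qed.

End RealStructureTheory.

Section WeightedScalarSpace.
Context {K : numFieldType} {Om M : Type} {om : M -> Type} {emb : forall m, Om -> om m}.
Context {domK : M -> set (Om -> K^o)} {TK : forall m, (Om -> K^o) -> om m -> K^o}.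
Hypothesis linK : linear_ops domK TK.
Context {J L : Type} {Ml : L -> set M} {M0 : set M} {nu : J -> L -> M -> Om -> K}.
Hypothesis nu_ge0 : forall j l m x, Ml l m -> 0 <= nu j l m x.

Local Notation FVK := (FVs emb domK TK Ml M0 nu).
Local Notation sle := (sle emb TK Ml nu).

Lemma lincomb1_0 : lincomb 1 (fun _ : Om => 0 : K^o) (fun _ => 0) = (fun _ => 0).
Proof. by apply: funext => x; rewrite /lincomb scaler0 addr0. Qed.

Lemma lincombZ (c : K) (f : Om -> K^o) : (fun x => c * f x) = lincomb c f (fun _ => 0).
Proof. by apply: funext => x; rewrite /lincomb addr0. Qed.

Lemma lincomb_comb (a b : K) (f g : Om -> K^o) :
  (fun x => a * f x + b * g x) = lincomb a f (lincomb b g (fun _ => 0)).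
Proof. by apply: funext => x; rewrite /lincomb addr0. Qed.

Lemma lincombB (f g : Om -> K^o) : (fun x => g x - f x) = lincomb (-1) f g.
Proof. by apply: funext => x; rewrite /lincomb scaleN1r addrC. Qed.

Lemma lincombD (f g : Om -> K^o) : (fun x => f x + g x) = lincomb 1 f g.
Proof. by apply: funext => x; rewrite /lincomb scale1r. Qed.

Lemma TK0 m : @TK m (fun _ => 0) = (fun _ => 0).
Proof.
have [dom0 lin] := linK m; have [_] := lin 1 _ _ dom0 dom0.
rewrite lincomb1_0 => T0; apply: funext => y; move: (congr1 (fun F => F y) T0).
by rewrite scale1r /= => /eqP; rewrite -subr_eq subrr eq_sym => /eqP.
Qed.

Lemma sle0 {j l} : sle j l (fun _ => 0) 0.
Proof. by move=> m x _; rewrite /absK TK0 normr0 mul0r. Qed.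

Lemma sle_le j l f e e' : sle j l f e -> e <= e' -> sle j l f e'.
Proof. by move=> fe ee' m x lm; apply: le_trans (fe m x lm) ee'. Qed.

Lemma sle_lincomb j l (c : K) f g e1 e2 : (forall m, domK m f) -> (forall m, domK m g) ->
  sle j l f e1 -> sle j l g e2 -> sle j l (lincomb c f g) (`|c| * e1 + e2).
Proof.
move=> df dg fe1 ge2 m x lm; have [_ lin] := linK m; rewrite /absK (lin c f g (df m) (dg m)).2.
apply: le_trans (ler_wpM2r (nu_ge0 j x lm) (ler_normD _ _)) _.
rewrite mulrDl normrM -mulrA lerD ?ge2 //.
by rewrite ler_wpM2l ?fe1.
Qed.

Lemma FVs0 : FVK (fun _ => 0).
Proof.
split=> [m|m _ y|j l []]; first by case: (linK m).
  by rewrite TK0.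
by exists 0; apply: sle0.
Qed.

Lemma FVs_dom f : FVK f -> forall m, domK m f.
Proof. by case. Qed.

Lemma FVs_lincomb (c : K) f g : FVK f -> FVK g -> FVK (lincomb c f g).
Proof.
move=> [df zf bf] [dg zg bg]; split=> [m|m m0 y|j l []].
- by have [_ lin] := linK m; case: (lin c f g (df m) (dg m)).
- have [_ lin] := linK m.
  by rewrite (lin c f g (df m) (dg m)).2 zf // zg // scaler0 addr0.
- have [e1 fe1] := bf j l tt; have [e2 ge2] := bg j l tt.
  by exists (`|c| * e1 + e2); apply: sle_lincomb.
Qed.

Lemma FVsZ (c : K) f : FVK f -> FVK (fun x => c * f x).
Proof. by move=> Ff; rewrite lincombZ; apply: FVs_lincomb Ff FVs0. Qed.

Lemma FVs_comb (a b : K) f g : FVK f -> FVK g -> FVK (fun x => a * f x + b * g x).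
Proof. by move=> Ff Fg; rewrite lincomb_comb; apply/FVs_lincomb/FVs_lincomb/FVs0. Qed.

Lemma FVsB f g : FVK f -> FVK g -> FVK (fun x => g x - f x).
Proof. by move=> Ff Fg; rewrite lincombB; apply: FVs_lincomb. Qed.

Lemma FVsD f g : FVK f -> FVK g -> FVK (fun x => f x + g x).
Proof. by move=> Ff Fg; rewrite lincombD; apply: FVs_lincomb. Qed.

Lemma sleZ j l (c : K) f e : FVK f -> sle j l f e -> sle j l (fun x => c * f x) (`|c| * e).
Proof.
move=> Ff fe; rewrite lincombZ -[X in sle _ _ _ X]addr0.
exact (sle_lincomb c (FVs_dom Ff) (FVs_dom FVs0) fe sle0).
Qed.

Lemma sle_comb j l (a b : K) f g e1 e2 : FVK f -> FVK g -> sle j l f e1 -> sle j l g e2 ->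
  sle j l (fun x => a * f x + b * g x) (`|a| * e1 + `|b| * e2).
Proof.
move=> Ff Fg fe1 ge2; rewrite lincomb_comb.
have := sleZ b Fg ge2; rewrite lincombZ => bge2.
exact (sle_lincomb a (FVs_dom Ff) (FVs_dom (FVs_lincomb b Fg FVs0)) fe1 bge2).
Qed.

Lemma sleD j l f g e1 e2 : FVK f -> FVK g -> sle j l f e1 -> sle j l g e2 ->
  sle j l (fun x => f x + g x) (e1 + e2).
Proof.
move=> Ff Fg fe1 ge2; rewrite lincombD.
by have := sle_lincomb 1 (FVs_dom Ff) (FVs_dom Fg) fe1 ge2; rewrite normr1 mul1r.
Qed.

Section DualFunctional.
Context {y : (Om -> K^o) -> K}.
Hypothesis y_dual : in_FVdual emb domK TK Ml M0 nu y.

Lemma dual_lincomb (c : K) f g : FVK f -> FVK g -> y (lincomb c f g) = c * y f + y g.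
Proof. by case: y_dual => lin _; apply: lin. Qed.

Lemma dual0 : y (fun _ => 0) = 0.
Proof.
have := dual_lincomb 1 FVs0 FVs0; rewrite lincomb1_0 mul1r.
by move/eqP; rewrite -subr_eq subrr eq_sym => /eqP.
Qed.

Lemma dualZ (c : K) f : FVK f -> y (fun x => c * f x) = c * y f.
Proof. by move=> Ff; rewrite lincombZ dual_lincomb ?dual0 ?addr0 //; exact: FVs0. Qed.

Lemma dualB f g : FVK f -> FVK g -> y (fun x => g x - f x) = y g - y f.
Proof. by move=> Ff Fg; rewrite lincombB dual_lincomb // mulN1r addrC. Qed.

Lemma dualD f g : FVK f -> FVK g -> y (fun x => f x + g x) = y f + y g.
Proof. by move=> Ff Fg; rewrite lincombD dual_lincomb // mul1r. Qed.

Lemma dual_continuous (eta : K) : 0 < eta -> exists j l (d : K), 0 < d /\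
  forall f, FVK f -> sle j l f d -> `|y f| <= eta.
Proof.
move=> eta0; case: y_dual => _ [j [l [d [d0 yb]]]].
exists j, l, (d * eta); split=> [|f Ff fe]; first exact: mulr_gt0.
have etaV0 : 0 <= eta^-1 by rewrite invr_ge0 ltW.
have /yb : sle j l (fun x => eta^-1 * f x) d.
  apply: sle_le (sleZ _ Ff fe) _.
  by rewrite ger0_norm // mulrCA mulVf ?gt_eqF // mulr1.
by rewrite dualZ // normrM ger0_norm // ler_pdivrMl // mulr1; apply; apply: FVsZ.
Qed.

Lemma open_FV_normr_gt (r : K) : open_FV emb domK TK Ml M0 nu [set f | FVK f /\ r < `|y f|].
Proof.
split=> [f [] //|f0 [Ff0 r_lt]]; set gap := (`|y f0| - r) / 2.
have gap0 : 0 < gap by rewrite divr_gt0 // subr_gt0.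
have [j [l [d [d0 yb]]]] := dual_continuous gap0.
exists j, l, d; split=> // f Ff fe; split=> //.
have := yb _ (FVsB Ff0 Ff) fe; rewrite dualB // distrC => /(le_trans (lerB_dist _ _)).
rewrite lerBlDr -lerBlDl => /(lt_le_trans _); apply.
have -> : `|y f0| - gap = r + gap by rewrite /gap; field.
by rewrite ltrDl.
Qed.

Lemma open_FV_normr_lt (r : K) : open_FV emb domK TK Ml M0 nu [set f | FVK f /\ `|y f| < r].
Proof.
split=> [f [] //|f0 [Ff0 lt_r]]; set gap := (r - `|y f0|) / 2.
have gap0 : 0 < gap by rewrite divr_gt0 // subr_gt0.
have [j [l [d [d0 yb]]]] := dual_continuous gap0.
exists j, l, d; split=> // f Ff fe; split=> //.
have := yb _ (FVsB Ff0 Ff) fe; rewrite dualB // => /(le_trans (lerB_dist _ _)).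
rewrite lerBlDr => /le_lt_trans; apply.
have -> : gap + `|y f0| = r - gap by rewrite /gap; field.
by rewrite ltrBlDr ltrDl.
Qed.

End DualFunctional.
End WeightedScalarSpace.

Lemma In_seq_choice (A B : Type) (Q : A -> B -> Prop) (s : seq A) :
  (forall a, List.In a s -> exists b, Q a b) ->
  exists t : seq B, (forall b, List.In b t -> exists a, List.In a s /\ Q a b) /\
    forall a, List.In a s -> exists b, List.In b t /\ Q a b.
Proof.
elim: s => [_|a s IH Qs]; first by exists nil; split=> [b|a] [].
have [b Qab] := Qs a (or_introl erefl).
have [t [tQ sQ]] := IH (fun a' sa' => Qs a' (or_intror sa')).
exists (b :: t); split=> [b' [<-|tb']|a' [<-|sa']].
- by exists a; split; [left|].
- by have [a' [sa' Qab']] := tQ b' tb'; exists a'; split; [right|].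
- by exists b; split; [left|].
- by have [b' [tb' Qab']] := sQ a' sa'; exists b'; split; [right|].
Qed.

Section CompactSets.
Context {K : numFieldType} {Om M : Type} {om : M -> Type} {emb : forall m, Om -> om m}.
Context {domK : M -> set (Om -> K^o)} {TK : forall m, (Om -> K^o) -> om m -> K^o}.
Hypothesis linK : linear_ops domK TK.
Context {J L : Type} {Ml : L -> set M} {M0 : set M} {nu : J -> L -> M -> Om -> K}.
Hypothesis nu_ge0 : forall j l m x, Ml l m -> 0 <= nu j l m x.

Local Notation FVK := (FVs emb domK TK Ml M0 nu).
Local Notation open := (open_FV emb domK TK Ml M0 nu).
Local Notation compact := (compact_FV emb domK TK Ml M0 nu).

Lemma compact_FV_subcover (C : set (Om -> K^o)) (I : Type) (P : set I)
    (O : I -> set (Om -> K^o)) :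
  compact C -> (forall i, P i -> open (O i)) -> C `<=` \bigcup_(i in P) O i ->
  exists s : seq I, (forall i, List.In i s -> P i) /\
    forall f, C f -> exists i, List.In i s /\ O i f.
Proof.
move=> [_ Ccpt] Oopen Ccov.
have Sopen : forall S, (O @` P) S -> open S by move=> _ [i Pi <-]; apply: Oopen.
have Scover : C `<=` \bigcup_(S in O @` P) S.
  by move=> f /Ccov [i Pi Oif]; exists (O i) => //; exists i.
have [S [SP Scov]] := Ccpt _ Sopen Scover.
have [|s [sS Ss]] := @In_seq_choice _ _ (fun S i => P i /\ O i = S) S.
  by move=> _ /SP [i Pi <-]; exists i.
exists s; split=> [i /sS [? [_ []]] //|f /Scov [_ [/Ss [i [si [_ <-]]]] Oif]].
by exists i.
Qed.

Definition scaleset (c : K) (C : set (Om -> K^o)) : set (Om -> K^o) :=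
  [set g | exists2 f, C f & g = (fun x => c * f x)].

Lemma open_FV_scale_preimage (c : K) (S : set (Om -> K^o)) : c != 0 -> open S ->
  open [set f | FVK f /\ S (fun x => c * f x)].
Proof.
move=> c0 [_ Sopen]; split=> [f [] //|f [Ff /Sopen [j [l [d [d0 Sball]]]]]].
have c0' : 0 < `|c| by rewrite normr_gt0.
exists j, l, (d / `|c|); split=> [|g Fg gf]; first by rewrite divr_gt0.
split=> //; apply: Sball; first exact: FVsZ.
have -> : (fun x => c * g x - c * f x) = (fun x => c * (g x - f x)).
  by apply: funext => x; rewrite mulrBr.
have := sleZ linK nu_ge0 c (FVsB linK nu_ge0 Ff Fg) gf.
by rewrite mulrCA divff ?gt_eqF // mulr1.
Qed.

Lemma compact_FV_scale (C : set (Om -> K^o)) (c : K) : c != 0 ->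
  compact C -> compact (scaleset c C).
Proof.
move=> c0 Ccpt; split=> [_ [f /Ccpt.1 Ff ->]|Os Oopen Ocov]; first exact: FVsZ.
pose O S := [set f | FVK f /\ S (fun x => c * f x)].
have Oopen' S : Os S -> open (O S) by move/Oopen; apply: open_FV_scale_preimage.
have Ocov' : C `<=` \bigcup_(S in Os) O S.
  move=> f Cf; have [S OsS Scf] := Ocov (fun x => c * f x) (ex_intro2 _ _ f Cf erefl).
  by exists S => //; split=> //; apply: Ccpt.1.
have [s [sOs scov]] := compact_FV_subcover Ccpt Oopen' Ocov'.
exists s; split=> // _ [f /scov [S [sS [_ Scf]]] ->].
by exists S.
Qed.

End CompactSets.

Lemma absconvex_scale (K : numFieldType) (Om : Type) (C : set (Om -> K^o)) (c : K) :
  absconvex C -> absconvex (scaleset c C).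
Proof.
move=> Cconv a b _ _ ab [f1 Cf1 ->] [f2 Cf2 ->].
exists (fun x => a * f1 x + b * f2 x); first exact: Cconv.
by apply: funext => x; rewrite mulrDr [a * _]mulrCA [b * _]mulrCA.
Qed.

Section HahnBanach.
Variables (R : realType) (K : numFieldType) (k : real_structure R K) (Om : Type).
Local Notation ofR := (ofR k).
Local Notation X := (Om -> K^o).

Definition addX (f g : X) : X := fun x => f x + g x.
Definition scX (r : R) (f : X) : X := fun x => ofR r * f x.

Lemma scX0 f : scX 0 f = (fun _ => 0).
Proof. by apply: funext => x; rewrite /scX rmorph0 mul0r. Qed.

Lemma homogeneous_at0 (W : set X) (F : X -> R) : W (fun _ => 0) ->
  (forall r f, W f -> F (scX r f) = r * F f) -> F (fun _ => 0) = 0.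
Proof. by move=> W0 FZ; rewrite -(scX0 (fun _ => 0)) FZ // mul0r. Qed.

Section OneStep.
Variables (W : set X) (Y t p : X -> R).
Hypothesis W0 : W (fun _ => 0).
Hypothesis WD : forall f g, W f -> W g -> W (addX f g).
Hypothesis WZ : forall r f, W f -> W (scX r f).
Hypothesis YD : forall f g, W f -> W g -> Y (addX f g) = Y f + Y g.
Hypothesis YZ : forall r f, W f -> Y (scX r f) = r * Y f.
Hypothesis tD : forall f g, W f -> W g -> t (addX f g) = t f + t g.
Hypothesis tZ : forall r f, W f -> t (scX r f) = r * t f.
Hypothesis pD : forall f g, W f -> W g -> p (addX f g) <= p f + p g.
Hypothesis pZ : forall r f, W f -> p (scX r f) = `|r| * p f.
Hypothesis Y_le_p : forall f, W f -> t f = 0 -> Y f <= p f.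

Let Z := [set f | W f /\ t f = 0].

Lemma kernel_gap e m n : W e -> Z m -> Z n ->
  Y m - p (addX m (scX (-1) e)) <= p (addX n e) - Y n.
Proof.
move=> We [Wm tm] [Wn tn].
have Ymn : Y m + Y n <= p (addX m n).
  by rewrite -YD //; apply: Y_le_p; [apply: WD|rewrite tD // tm tn addr0].
have mn_split : addX m n = addX (addX m (scX (-1) e)) (addX n e).
  by apply: funext => x; rewrite /addX /scX rmorphN1; ring.
rewrite mn_split in Ymn.
have := le_trans Ymn (pD (WD Wm (WZ (-1) We)) (WD Wn We)); lra.
Qed.

Lemma kernel_separation e : W e -> exists lam,
  (forall m, Z m -> Y m - p (addX m (scX (-1) e)) <= lam) /\
  (forall n, Z n -> lam <= p (addX n e) - Y n).
Proof.
move=> We; have Z0 : Z (fun _ => 0) by split=> //; apply: homogeneous_at0 tZ.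
pose S := [set Y m - p (addX m (scX (-1) e)) | m in Z].
have S0 : S !=set0 by eexists; exists (fun _ => 0).
have Sub : has_ubound S.
  by exists (p (addX (fun _ => 0) e) - Y (fun _ => 0)) => _ [m Zm <-]; apply: kernel_gap.
exists (sup S); split=> [m Zm|n Zn]; first by apply: (ub_le_sup Sub); exists m.
by apply: ge_sup S0 _ => _ [m Zm <-]; apply: kernel_gap.
Qed.

(* The extension constant is [Y e - lam], with [t e = 1] and [lam] separating the
   two sides of [kernel_gap]. *)
Lemma hahn_banach_step : exists c, forall f, W f -> Y f - c * t f <= p f.
Proof.
have [[f1 [Wf1 tf1]]|t0] := pselect (exists f, W f /\ t f != 0); last first.
  exists 0 => f Wf; rewrite mul0r subr0 Y_le_p //.
  by have [//|tf] := eqVneq (t f) 0; case: t0; exists f.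
pose e := scX (t f1)^-1 f1.
have We : W e by apply: WZ.
have te : t e = 1 by rewrite tZ // mulVf.
clearbody e.
have [lam [le_lam lam_le]] := kernel_separation We.
exists (Y e - lam) => f Wf; set a := t f.
pose n := addX f (scX (- a) e).
have Wn : W n by apply: WD; last apply: WZ.
have Zn : Z n by split=> //; rewrite tD ?tZ ?te ?mulr1 ?addrN //; apply: WZ.
have Yn : Y n = Y f - a * Y e by rewrite YD ?YZ ?mulNr //; apply: WZ.
have [a0|a0|a0] := ltrgtP a 0; last by rewrite a0 mulr0 subr0; apply: Y_le_p.
- have na0 : 0 < - a by rewrite oppr_gt0.
  pose m := scX (- a)^-1 n.
  have Zm : Z m by split; [apply: WZ|rewrite tZ // Zn.2 mulr0].
  have Ym : - a * Y m = Y n by rewrite YZ // mulrA mulrV ?unitfE ?gt_eqF // mul1r.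
  have pf : p f = - a * p (addX m (scX (-1) e)).
    rewrite -{1}(gtr0_norm na0) -pZ; last by apply: WD; [case: Zm|apply: WZ].
    congr p; apply: funext => x; rewrite /m /n /scX /addX !rmorphN fmorphV rmorph1.
    by field; rewrite (fmorph_eq0 ofR) lt_eqF.
  have := ler_wpM2l (ltW na0) (le_lam m Zm); rewrite mulrBr Ym -pf.
  by lra.
- pose m := scX a^-1 n.
  have Zm : Z m by split; [apply: WZ|rewrite tZ // Zn.2 mulr0].
  have Ym : a * Y m = Y n by rewrite YZ // mulrA mulrV ?unitfE ?gt_eqF // mul1r.
  have pf : p f = a * p (addX m e).
    rewrite -{1}(gtr0_norm a0) -pZ; last by apply: WD; [case: Zm|].
    congr p; apply: funext => x; rewrite /m /n /scX /addX rmorphN fmorphV.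
    by field; rewrite (fmorph_eq0 ofR) gt_eqF.
  have := ler_wpM2l (ltW a0) (lam_le m Zm); rewrite mulrBr Ym -pf.
  by lra.
Qed.
End OneStep.

Section FiniteCodimension.
Variables (I : Type) (t : I -> X -> R) (V : set X) (p : X -> R).
Hypothesis V0 : V (fun _ => 0).
Hypothesis VD : forall f g, V f -> V g -> V (addX f g).
Hypothesis VZ : forall r f, V f -> V (scX r f).
Hypothesis tD : forall i f g, V f -> V g -> t i (addX f g) = t i f + t i g.
Hypothesis tZ : forall i r f, V f -> t i (scX r f) = r * t i f.
Hypothesis pD : forall f g, V f -> V g -> p (addX f g) <= p f + p g.
Hypothesis pZ : forall r f, V f -> p (scX r f) = `|r| * p f.

Lemma hahn_banach_finite (ts : seq I) (Y : X -> R) :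
  (forall f g, V f -> V g -> Y (addX f g) = Y f + Y g) ->
  (forall r f, V f -> Y (scX r f) = r * Y f) ->
  (forall f, V f -> (forall i, List.In i ts -> t i f = 0) -> Y f <= p f) ->
  exists cs : seq (R * I), (forall ci, List.In ci cs -> List.In ci.2 ts) /\
    forall f, V f -> Y f - \sum_(ci <- cs) ci.1 * t ci.2 f <= p f.
Proof.
elim: ts Y => [|i ts IH] Y YD YZ Y_le_p.
  by exists nil; split=> // f Vf; rewrite big_nil subr0 Y_le_p.
pose W := [set f | V f /\ forall j, List.In j ts -> t j f = 0].
have W0 : W (fun _ => 0) by split=> // j _; apply: homogeneous_at0 (tZ j).
have WD f g : W f -> W g -> W (addX f g).
  by move=> [Vf tf] [Vg tg]; split=> [|j tsj]; [apply: VD|rewrite tD // tf // tg // addr0].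
have WZ r f : W f -> W (scX r f).
  by move=> [Vf tf]; split=> [|j tsj]; [apply: VZ|rewrite tZ // tf // mulr0].
have [|c Yc] := @hahn_banach_step W Y (t i) p W0 WD WZ
  (fun f g Wf Wg => YD f g Wf.1 Wg.1) (fun r f Wf => YZ r f Wf.1)
  (fun f g Wf Wg => tD i Wf.1 Wg.1) (fun r f Wf => tZ i r Wf.1)
  (fun f g Wf Wg => pD Wf.1 Wg.1) (fun r f Wf => pZ r Wf.1).
  by move=> f [Vf tf] ti; apply: Y_le_p => // j [<-|]; last apply: tf.
have [|||cs [csts Ycs]] := IH (fun f => Y f - c * t i f).
- by move=> f g Vf Vg; rewrite YD // tD //; ring.
- by move=> r f Vf; rewrite YZ // tZ //; ring.
- by move=> f Vf tf; apply: Yc.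
exists ((c, i) :: cs); split=> [ci [<-|csci]|f Vf]; [by left|by right; apply: csts|].
by rewrite big_cons /= opprD addrA; apply: Ycs.
Qed.

End FiniteCodimension.
End HahnBanach.

Lemma unimodular_rotation (K : numFieldType) (z : K) :
  exists2 zeta : K, `|zeta| = 1 & zeta * z = `|z|.
Proof.
have [->|z0] := eqVneq z 0; first by exists 1; rewrite ?normr1 ?mulr0 ?normr0.
exists (`|z| / z); last by rewrite divfK.
by rewrite normrM normr_id normrV ?unitfE // divff // normr_eq0.
Qed.

Lemma halfr_lt (K : numFieldType) (x : K) : 0 < x -> x / 2 < x.
Proof. by move=> x0; rewrite ltr_pdivrMr // ltr_pMr // ltr1n. Qed.

Lemma eq0_norm_small (K : numFieldType) (z : K) :
  (forall eta, 0 < eta -> `|z| <= eta) -> z = 0.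
Proof.
move=> z_small; apply/eqP; rewrite -normr_eq0 eq_le normr_ge0 andbT.
apply/negP => /negP; rewrite -real_ltNge ?normr_real // => z0.
by move: (z_small _ (divr_gt0 z0 (ltr0Sn _ 1))) => /(lt_le_trans (halfr_lt z0)); rewrite ltxx.
Qed.

Section LocallyConvex.
Variables (K : numFieldType) (E : lmodType K) (A : Type) (p : A -> E -> K).
Hypothesis p_seminorm : forall a, is_seminorm (p a).

Lemma seminorm0 a : p a 0 = 0.
Proof. by have [_ _ pZ] := p_seminorm a; rewrite -(scale0r 0) pZ normr0 mul0r. Qed.

Section DualVector.
Variable e : E -> K.
Hypothesis e_dual : in_dual p e.

Lemma in_dual_lincomb c x1 x2 : e (c *: x1 + x2) = c * e x1 + e x2.
Proof. by case: e_dual => lin _; apply: lin. Qed.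

Lemma in_dual0 : e 0 = 0.
Proof.
have := in_dual_lincomb 1 0 0; rewrite scaler0 addr0 mul1r.
by move/eqP; rewrite -subr_eq subrr eq_sym => /eqP.
Qed.

Lemma in_dualZ c x : e (c *: x) = c * e x.
Proof. by have := in_dual_lincomb c x 0; rewrite !addr0 in_dual0 addr0. Qed.

Lemma in_dualD x1 x2 : e (x1 + x2) = e x1 + e x2.
Proof. by have := in_dual_lincomb 1 x1 x2; rewrite scale1r mul1r. Qed.

Lemma in_dualB x1 x2 : e (x1 - x2) = e x1 - e x2.
Proof. by rewrite in_dualD -scaleN1r in_dualZ mulN1r. Qed.

Lemma in_dual_bound : exists a (C : K), 0 < C /\ forall x, `|e x| <= C * p a x.
Proof.
case: e_dual => _ [a [C eC]]; exists a, (`|C| + 1); split=> [|x]; first by rewrite ltr_wpDl.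
have [p0 _ _] := p_seminorm a; apply: le_trans (eC x) _.
have [px0|px0] := eqVneq (p a x) 0; first by rewrite px0 !mulr0.
have CR : C \is Num.real.
  have Cpx0 : 0 <= C * p a x := le_trans (normr_ge0 _) (eC x).
  by rewrite -(mulfK px0 C) rpredM ?rpredV ?ger0_real.
by rewrite ler_wpM2r // (le_trans (real_ler_norm CR)) // lerDl.
Qed.

End DualVector.

Lemma fixes_topology_separates (B : nat -> set (E -> K)) z :
  frechet p -> fixes_topology p B -> (forall n e, B n e -> e z = 0) -> z = 0.
Proof.
move=> [_ _ p_sep _ _] [_ _ _ Bfix] Bz; apply: p_sep => a.
have [p0 _ _] := p_seminorm a; apply/eqP; rewrite eq_le p0 andbT.
apply/negP => /negP; rewrite -real_ltNge ?ger0_real // => pz0.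
have [n Bn] := Bfix a _ (divr_gt0 pz0 (ltr0Sn _ 1)).
have : p a z <= p a z / 2 by apply: Bn => e Be; rewrite (Bz n) // normr0 ler01.
by move/(lt_le_trans (halfr_lt pz0)); rewrite ltxx.
Qed.

End LocallyConvex.

Lemma In_pmap_id (T : Type) (s : seq (option T)) x :
  List.In x (pmap id s) <-> List.In (Some x) s.
Proof.
elim: s => [|[y|] s IH] //=; last by rewrite IH; split=> [|[]] //; right.
by rewrite IH; split=> [[<-|]|[[<-]|]]; by [left|right].
Qed.

Section Approximation.
Variables (R : realType) (K : numFieldType) (k : real_structure R K).
Variables (Om M : Type) (om : M -> Type) (emb : forall m, Om -> om m).
Variables (domK : M -> set (Om -> K^o)) (TK : forall m, (Om -> K^o) -> om m -> K^o).
Variables (MV M0V : set M) (nuV : M -> Om -> K).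
Variables (JW LW : Type) (MlW : LW -> set M) (M0W : set M) (nuW : JW -> LW -> M -> Om -> K).
Variable U : set {m : M & om m}.
Hypothesis Om_inhabited : inhabited Om.
Hypothesis linK : linear_ops domK TK.
Hypothesis weightsV : weights_ok emb (fun _ : unit => MV) M0V (fun _ _ : unit => nuV).
Hypothesis weightsW : weights_ok emb MlW M0W nuW.
Hypothesis FV_banach :
  banach_FV emb domK TK (fun _ : unit => MV) M0V (fun _ _ : unit => nuV) tt tt.
Hypothesis ball_compact : compact_FV emb domK TK MlW M0W nuW (ballV emb domK TK MV M0V nuV).
Hypothesis U_uniqueness :
  uniqueness_set emb domK TK (fun _ : unit => MV) M0V (fun _ _ : unit => nuV) U.
Hypothesis TK_dualW : forall m (x : om m), in_FVdual emb domK TK MlW M0W nuW (fun f => @TK m f x).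

Local Notation ofR := (ofR k).
Local Notation re := (re k).
Local Notation X := (Om -> K^o).
Local Notation FV := (FV1 emb domK TK MV M0V nuV).
Local Notation FW := (FVs emb domK TK MlW M0W nuW).
Local Notation normV_le := (normV_le emb TK MV nuV).
Local Notation ball := (ballV emb domK TK MV M0V nuV).
Local Notation dualW := (in_FVdual emb domK TK MlW M0W nuW).

Lemma nuV_ge0 (j l : unit) m x : MV m -> 0 <= nuV m x.
Proof. by case: weightsV => _ _ nu0 _ _; apply: (nu0 j l). Qed.

Lemma nuW_ge0 j l m x : MlW l m -> 0 <= nuW j l m x.
Proof. by case: weightsW => _ _ nu0 _ _; apply: nu0. Qed.

Lemma MV_nonempty : exists m, MV m.
Proof. by case: weightsV => _ MV0 _ _ _; apply: MV0 tt. Qed.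

Lemma weighted_ge0 f m x : MV m -> 0 <= `|@TK m f (emb m x)| * nuV m x.
Proof. by move=> MVm; rewrite mulr_ge0 ?nuV_ge0. Qed.

Lemma normV_le_ge0 f C : normV_le f C -> 0 <= C.
Proof.
have [m MVm] := MV_nonempty; case: Om_inhabited => x fC.
exact: le_trans (weighted_ge0 f x MVm) (fC m x MVm).
Qed.

Lemma FV_normV_le f : FV f -> exists C, normV_le f C.
Proof. by case=> _ _ /(_ tt tt tt). Qed.

Lemma ballV_FW f : ball f -> FW f.
Proof. exact: ball_compact.1. Qed.

Lemma scale_into_ballV f C c : FV f -> normV_le f C -> 0 < c -> C <= c ->
  ball (fun x => c^-1 * f x).
Proof.
move=> Ff fC c0 Cc; split; first exact: (FVsZ linK nuV_ge0 _ Ff).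
apply: sle_le (sleZ linK nuV_ge0 c^-1 Ff fC) _.
rewrite ger0_norm; last by rewrite invr_ge0 ltW.
by rewrite mulrC ler_pdivrMr // mul1r.
Qed.

Lemma scale_unscale (c : K) (f : X) : c != 0 -> f = (fun x => c * (c^-1 * f x)).
Proof. by move=> c0; apply: funext => x; rewrite mulrA divff // mul1r. Qed.

Lemma FV_FW f : FV f -> FW f.
Proof.
move=> Ff; have [C fC] := FV_normV_le Ff; have C0 := normV_le_ge0 fC.
have C1 : 0 < C + 1 by rewrite ltr_wpDl.
rewrite (scale_unscale f (lt0r_neq0 C1)); apply: (FVsZ linK nuW_ge0).
by apply/ballV_FW/(scale_into_ballV Ff fC C1); rewrite lerDl.
Qed.

(* The norm of FV(Omega), taken in R where suprema exist. *)
Definition normV (f : X) : R :=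
  sup [set r | exists m x, MV m /\ r = re (`|@TK m f (emb m x)| * nuV m x)].

Lemma normV_le_iff f r : FV f -> normV f <= r <-> normV_le f (ofR r).
Proof.
move=> Ff; have [C fC] := FV_normV_le Ff.
have ub : has_ubound [set r | exists m x, MV m /\ r = re (`|@TK m f (emb m x)| * nuV m x)].
  exists (re C) => _ [m [x [MVm ->]]]; apply: ler_re; rewrite ?ger0_real ?weighted_ge0 //.
    exact: normV_le_ge0 fC.
  exact: fC.
split=> [fr m x MVm|fr].
  rewrite /absK real_ler_ofR ?ger0_real ?weighted_ge0 //; apply: le_trans fr.
  by apply: (ub_le_sup ub); exists m, x.
have [m MVm] := MV_nonempty; case: Om_inhabited => x0.
apply: ge_sup; first by eexists; exists m, x0.
by move=> _ [m' [x [MVm' ->]]]; rewrite -real_ler_ofR ?ger0_real ?weighted_ge0 //; apply: fr.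
Qed.

Lemma normV_normV_le f : FV f -> normV_le f (ofR (normV f)).
Proof. by move=> Ff; apply/(normV_le_iff _ Ff). Qed.

Lemma normV_ge0 f : FV f -> 0 <= normV f.
Proof.
move=> Ff; have := normV_le_ge0 (normV_normV_le Ff).
by rewrite -(rmorph0 ofR) ler_ofR.
Qed.

Lemma normV_triangle f g : FV f -> FV g -> normV (addX f g) <= normV f + normV g.
Proof.
move=> Ff Fg; apply/normV_le_iff; first exact: (FVsD linK nuV_ge0 Ff Fg).
rewrite rmorphD; exact (sleD linK nuV_ge0 Ff Fg (normV_normV_le Ff) (normV_normV_le Fg)).
Qed.

Lemma normV_scale_le r f : FV f -> normV (scX k r f) <= `|r| * normV f.
Proof.
move=> Ff; apply/normV_le_iff; first exact: (FVsZ linK nuV_ge0 _ Ff).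
rewrite rmorphM -normr_ofR; exact (sleZ linK nuV_ge0 _ Ff (normV_normV_le Ff)).
Qed.

Lemma normV_scale r f : FV f -> normV (scX k r f) = `|r| * normV f.
Proof.
move=> Ff; apply/le_anti; rewrite normV_scale_le //=.
have [->|r0] := eqVneq r 0; first by rewrite normr0 mul0r normV_ge0 //; apply: (FVsZ linK nuV_ge0).
have rf_f : scX k r^-1 (scX k r f) = f.
  by apply: funext => x; rewrite /scX mulrA -rmorphM mulVf // rmorph1 mul1r.
have := normV_scale_le r^-1 (FVsZ linK nuV_ge0 (ofR r) Ff); rewrite rf_f normrV ?unitfE //.
by rewrite -(ler_pM2l (_ : 0 < `|r|)) ?normr_gt0 // mulrA mulfV ?normr_eq0 // mul1r.
Qed.

Lemma normV_eq0 f : FV f -> normV f = 0 -> f = (fun _ => 0).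
Proof.
move=> Ff f0; apply: FV_banach.1 => // e e0.
by apply: sle_le (normV_normV_le Ff) _; rewrite f0 rmorph0 ltW.
Qed.

Definition Tpt (mx : {m : M & om m}) (f : X) : K := @TK (projT1 mx) f (projT2 mx).

Lemma Tpt_dualW mx : dualW (Tpt mx).
Proof. exact: TK_dualW. Qed.

Definition pt_comb (ds : seq (K * {m : M & om m})) (f : X) : K :=
  \sum_(cmx <- ds) cmx.1 * Tpt cmx.2 f.

Lemma pt_combZ ds (c : K) f : FW f -> pt_comb ds (fun x => c * f x) = c * pt_comb ds f.
Proof.
move=> Ff; rewrite /pt_comb big_distrr; apply: eq_bigr => cmx _.
by rewrite (dualZ linK (Tpt_dualW _)) // mulrCA.
Qed.

Definition re_fun (c : K) (y : X -> K) (f : X) : R := re (c * y f).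

Lemma re_funD c y f g : dualW y -> FV f -> FV g ->
  re_fun c y (addX f g) = re_fun c y f + re_fun c y g.
Proof.
by move=> yW Ff Fg; rewrite /re_fun /addX (dualD yW (FV_FW Ff) (FV_FW Fg)) mulrDr reD.
Qed.

Lemma re_funZ c y r f : dualW y -> FV f -> re_fun c y (scX k r f) = r * re_fun c y f.
Proof.
by move=> yW Ff; rewrite /re_fun /scX (dualZ linK yW _ (FV_FW Ff)) mulrCA reZ.
Qed.

Lemma re_fun_eq0 y f : re_fun 1 y f = 0 -> re_fun (iu k) y f = 0 -> y f = 0.
Proof. by rewrite /re_fun mul1r; apply: re_iu_eq0. Qed.

Definition iub (b : bool) : K := if b then iu k else 1.

Definition re_pt (i : {m : M & om m} * bool) : X -> R := re_fun (iub i.2) (Tpt i.1).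

Lemma re_le_normV_on_kernel y (eps : K) (ks : seq {m : M & om m}) : dualW y -> 0 < eps ->
  (forall f, ball f -> (forall mx, List.In mx ks -> Tpt mx f = 0) -> `|y f| <= eps) ->
  forall f, FV f -> (forall mx, List.In mx ks -> Tpt mx f = 0) -> re (y f) <= re eps * normV f.
Proof.
move=> yW eps0 y_small f Ff kf.
have [f0|nf0] := eqVneq (normV f) 0.
  by rewrite f0 mulr0 (normV_eq0 Ff f0) (dual0 linK yW) re0.
have nf_gt0 : 0 < normV f by rewrite lt0r nf0 normV_ge0.
pose h := scX k (normV f)^-1 f.
have Fh : FV h := FVsZ linK nuV_ge0 _ Ff.
have hball : ball h.
  split=> //; rewrite -(rmorph1 ofR); apply/(normV_le_iff _ Fh).
  by rewrite normV_scale // ger0_norm ?mulVf // invr_ge0 ltW.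
have kh mx : List.In mx ks -> Tpt mx h = 0.
  by move=> ksmx; rewrite /h /scX (dualZ linK (Tpt_dualW mx) _ (FV_FW Ff)) kf // mulr0.
have yh : re (y h) = (normV f)^-1 * re (y f).
  by rewrite /h /scX (dualZ linK yW _ (FV_FW Ff)) reZ.
have := le_trans (re_le_norm k (y h))
  (ler_re k (normr_real (y h)) (gtr0_real eps0) (y_small h hball kh)).
by rewrite yh mulrC ler_pdivrMr // mulrC.
Qed.

Lemma re_pt_comb (cs : seq (R * ({m : M & om m} * bool))) f :
  re (pt_comb [seq (iub ci.2.2 * ofR ci.1, ci.2.1) | ci <- cs] f) =
  \sum_(ci <- cs) ci.1 * re_pt ci.2 f.
Proof.
rewrite /pt_comb big_map re_sum; apply: eq_bigr => ci _.
by rewrite /re_pt /re_fun /= [_ * ofR _]mulrC -mulrA reZ.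
Qed.

Lemma re_dominated_combination y (eps : K) ks : dualW y -> 0 < eps ->
  (forall f, ball f -> (forall mx, List.In mx ks -> Tpt mx f = 0) -> `|y f| <= eps) ->
  exists2 ds, (forall cmx, List.In cmx ds -> List.In cmx.2 ks) &
    forall f, FV f -> re (y f - pt_comb ds f) <= re eps * normV f.
Proof.
move=> yW eps0 y_small.
pose ts := [seq (mx, false) | mx <- ks] ++ [seq (mx, true) | mx <- ks].
have ts_ks i : List.In i ts -> List.In i.1 ks.
  by move=> /(List.in_app_or _ _ i) [] /List.in_map_iff [mx [<-]].
have ker f : FV f -> (forall i, List.In i ts -> re_pt i f = 0) ->
    forall mx, List.In mx ks -> Tpt mx f = 0.
  move=> Ff tf mx ksmx; apply: re_fun_eq0; [apply: (tf (mx, false))|apply: (tf (mx, true))].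
    by apply: List.in_or_app; left; apply: (List.in_map (fun mx => (mx, false))).
  by apply: List.in_or_app; right; apply: (List.in_map (fun mx => (mx, true))).
have VD f g : FV f -> FV g -> FV (addX f g) by move=> Ff Fg; exact: (FVsD linK nuV_ge0 Ff Fg).
have VZ r f : FV f -> FV (scX k r f) by move=> Ff; exact: (FVsZ linK nuV_ge0 (ofR r) Ff).
have tD i f g : FV f -> FV g -> re_pt i (addX f g) = re_pt i f + re_pt i g.
  by apply: re_funD; apply: Tpt_dualW.
have tZ i r f : FV f -> re_pt i (scX k r f) = r * re_pt i f.
  by apply: re_funZ; apply: Tpt_dualW.
have pD f g : FV f -> FV g ->
    re eps * normV (addX f g) <= re eps * normV f + re eps * normV g.
  by move=> Ff Fg; rewrite -mulrDr ler_wpM2l ?normV_triangle ?re_ge0 ?ltW.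
have pZ r f : FV f -> re eps * normV (scX k r f) = `|r| * (re eps * normV f).
  by move=> Ff; rewrite normV_scale // mulrCA.
have [|||cs [csts Ycs]] :=
  hahn_banach_finite (FVs0 linK) VD VZ tD tZ pD pZ (ts := ts) (Y := re_fun 1 y).
- by move=> f g; apply: re_funD.
- by move=> r f; apply: re_funZ.
- move=> f Ff tf; rewrite /re_fun mul1r.
  exact: re_le_normV_on_kernel yW eps0 y_small f Ff (ker f Ff tf).
exists [seq (iub ci.2.2 * ofR ci.1, ci.2.1) | ci <- cs] => [_ /List.in_map_iff [ci [<- csci]]|f Ff].
  exact: ts_ks (csts _ csci).
by rewrite reB re_pt_comb; have := Ycs f Ff; rewrite /re_fun mul1r.
Qed.

Lemma approx_on_kernel y (eps : K) ks : dualW y -> 0 < eps -> (forall mx, List.In mx ks -> U mx) ->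
  (forall f, ball f -> (forall mx, List.In mx ks -> Tpt mx f = 0) -> `|y f| <= eps) ->
  exists2 ds, (forall cmx, List.In cmx ds -> U cmx.2) &
    forall f, ball f -> `|y f - pt_comb ds f| <= eps.
Proof.
move=> yW eps0 ksU y_small; have [ds dsks re_le] := re_dominated_combination yW eps0 y_small.
exists ds => [cmx /dsks /ksU //|f [Ff fV1]]; set z := y f - pt_comb ds f.
have [zeta zeta1 zeta_z] := unimodular_rotation z.
have Fh : FV (fun x => zeta * f x) by exact: (FVsZ linK nuV_ge0 zeta Ff).
have nh : normV (fun x => zeta * f x) <= 1.
  apply/(normV_le_iff _ Fh); rewrite rmorph1.
  by have := sleZ linK nuV_ge0 zeta Ff fV1; rewrite zeta1 mulr1 => /(_ tt tt).
have zh : y (fun x => zeta * f x) - pt_comb ds (fun x => zeta * f x) = `|z|.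
  by rewrite (dualZ linK yW _ (FV_FW Ff)) (pt_combZ ds zeta (FV_FW Ff)) -mulrBr zeta_z.
have re_z : re `|z| <= re eps.
  have := re_le _ Fh; rewrite zh => /le_trans; apply.
  by rewrite -[leRHS]mulr1 ler_wpM2l // re_ge0 // ltW.
by rewrite -(ofR_re k (gtr0_real eps0)) real_ler_ofR ?normr_real.
Qed.

Lemma small_on_finite_kernel y (eps : K) : dualW y -> 0 < eps ->
  exists2 ks, (forall mx, List.In mx ks -> U mx) &
    forall f, ball f -> (forall mx, List.In mx ks -> Tpt mx f = 0) -> `|y f| <= eps.
Proof.
move=> yW eps0.
(* Only 0 is annihilated by all T_{m,x}, so these sets cover the ball. *)
pose O (i : option {m : M & om m}) : set X :=
  if i is Some mx then [set f | FW f /\ 0 < `|Tpt mx f|] else [set f | FW f /\ `|y f| < eps].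
pose P (i : option {m : M & om m}) : Prop := if i is Some mx then U mx else True.
have Oopen i : P i -> open_FV emb domK TK MlW M0W nuW (O i).
  case: i => [mx|] _; first exact: (open_FV_normr_gt linK nuW_ge0 (Tpt_dualW mx)).
  exact: (open_FV_normr_lt linK nuW_ge0 yW).
have Ocov : ball `<=` \bigcup_(i in P) O i.
  move=> f fball; have Ff := ballV_FW fball.
  have [[mx [Umx Tf]]|Tf0] := pselect (exists mx, U mx /\ Tpt mx f != 0).
    by exists (Some mx) => //; split; rewrite ?normr_gt0.
  exists None => //; split=> //.
  suff -> : f = (fun _ => 0) by rewrite (dual0 linK yW) normr0.
  apply: (U_uniqueness.2 f fball.1) => m x Umx.
  by have [//|Tf] := eqVneq (@TK m f x) 0; case: Tf0; exists (existT _ m x).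
have [s [sP scov]] := compact_FV_subcover ball_compact Oopen Ocov.
exists (pmap id s) => [mx /In_pmap_id /sP //|f fball kf].
have [[mx|] [si [_ Oif]]] := scov f fball; last exact: ltW.
by move: Oif; rewrite kf ?normr0 ?ltxx // In_pmap_id.
Qed.

Lemma approx_by_point_functionals y (eps : K) : dualW y -> 0 < eps ->
  exists2 ds, (forall cmx, List.In cmx ds -> U cmx.2) &
    forall f, ball f -> `|y f - pt_comb ds f| <= eps.
Proof.
move=> yW eps0; have [ks ksU y_small] := small_on_finite_kernel yW eps0.
exact: approx_on_kernel yW eps0 ksU y_small.
Qed.

Section Construction.
Variables (E : lmodType K) (A : Type) (p : A -> E -> K) (B : nat -> set (E -> K)).
Variable g : {m : M & om m} -> E.
Hypothesis E_frechet : frechet p.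
Hypothesis B_fixes : fixes_topology p B.
Hypothesis g_sb : FVG_sb emb domK TK MV M0V nuV U (span_union B) B g.

Lemma p_seminorm a : is_seminorm (p a).
Proof. by case: E_frechet. Qed.

Lemma B_dual n e : B n e -> in_dual p e.
Proof. by case: B_fixes => _ /(_ n) [Bn _] _ _; apply: Bn. Qed.

Definition interpolates (e : E -> K) (f : X) : Prop :=
  forall m (x : om m), U (existT _ m x) -> @TK m f x = e (g (existT _ m x)).

Lemma interpolant_exists n e : B n e -> exists2 f, FV f & interpolates e f.
Proof.
move=> Bne; have Ge : span_union B e.
  exists [:: (1, e)]; split=> [c [<-|[]]|]; first by exists n.
  by apply: funext => x; rewrite big_seq1 mul1r.
by have [/(_ e Ge) [f [Ff fe]] _] := g_sb; exists f.
Qed.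

Lemma interpolant_bound n : exists2 c : K, 0 < c &
  forall e f, B n e -> FV f -> interpolates e f -> ball (fun x => c^-1 * f x).
Proof.
have [_ /(_ n) [C Cbound]] := g_sb.
exists (`|C| + 1) => [|e f Bne Ff fe]; first by rewrite ltr_wpDl.
have fC := Cbound e f Bne Ff fe.
apply: (scale_into_ballV Ff fC); first by rewrite ltr_wpDl.
by rewrite ger0_norm ?lerDl //; apply: normV_le_ge0 fC.
Qed.

Definition represents (y : X -> K) (v : E) : Prop :=
  forall n e f, B n e -> FV f -> interpolates e f -> e v = y f.

Lemma represents_unique y v1 v2 : represents y v1 -> represents y v2 -> v1 = v2.
Proof.
move=> yv1 yv2; apply/eqP; rewrite -subr_eq0; apply/eqP.
apply: (fixes_topology_separates p_seminorm E_frechet B_fixes) => n e Bne.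
have [f Ff fe] := interpolant_exists Bne.
by rewrite (in_dualB (B_dual Bne)) (yv1 n e f) // (yv2 n e f) // subrr.
Qed.

Definition g_comb (ds : seq (K * {m : M & om m})) : E := \sum_(cmx <- ds) cmx.1 *: g cmx.2.

Lemma in_dual_g_comb e ds f : in_dual p e -> (forall cmx, List.In cmx ds -> U cmx.2) ->
  interpolates e f -> e (g_comb ds) = pt_comb ds f.
Proof.
move=> e_dual; elim: ds => [|[c [m x]] ds IH] dsU fe.
  by rewrite /g_comb /pt_comb !big_nil (in_dual0 e_dual).
rewrite /g_comb /pt_comb !big_cons -/(g_comb ds) -/(pt_comb ds f).
rewrite (in_dual_lincomb e_dual) IH // => [|cmx dscmx]; last by apply: dsU; right.
by rewrite /Tpt /= fe //; apply: (dsU (c, existT _ m x)); left.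
Qed.

Section Limit.
Variable y : X -> K.
Hypothesis yW : dualW y.
Variable D : nat -> seq (K * {m : M & om m}).
Hypothesis DU : forall n cmx, List.In cmx (D n) -> U cmx.2.
Hypothesis D_approx : forall n f, ball f -> `|y f - pt_comb (D n) f| <= n.+1%:R^-1.

Lemma g_comb_error n0 e f c n : B n0 e -> FV f -> interpolates e f -> 0 < c ->
  ball (fun x => c^-1 * f x) -> `|e (g_comb (D n)) - y f| <= c / n.+1%:R.
Proof.
move=> Be Ff fe c0 fball; rewrite (in_dual_g_comb (B_dual Be) (@DU n) fe) distrC.
have Ff' := ballV_FW fball; rewrite (scale_unscale f (lt0r_neq0 c0)).
rewrite (dualZ linK yW _ Ff') (pt_combZ _ _ Ff') -mulrBr normrM gtr0_norm //.
by rewrite ler_pM2l //; apply: D_approx.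
Qed.

Lemma g_comb_cauchy a eta : 0 < eta -> exists N, forall n l, (N <= n)%N -> (N <= l)%N ->
  p a (g_comb (D n) - g_comb (D l)) <= eta.
Proof.
move=> eta0; have [_ _ _ Bfix] := B_fixes; have [n0 Bn0] := Bfix a eta eta0.
have [c c0 cball] := interpolant_bound n0.
have [N cN] := inv_succ_small k c0 (divr_gt0 ltr01 (ltr0Sn K 1)).
exists N => n l Nn Nl; apply: Bn0 => e Be.
have [f Ff fe] := interpolant_exists Be.
have err j := g_comb_error j Be Ff fe c0 (cball e f Be Ff fe).
rewrite (in_dualB (B_dual Be)); apply: le_trans (ler_distD (y f) _ _) _.
rewrite [X in _ + X]distrC [leRHS](splitr 1).
by rewrite lerD // (le_trans (err _)) ?cN.
Qed.

Lemma g_comb_limit_represents : exists v, represents y v.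
Proof.
have [_ _ _ _ complete] := E_frechet; have [v vlim] := complete _ g_comb_cauchy.
exists v => n0 e f Be Ff fe; apply/eqP; rewrite -subr_eq0; apply/eqP.
apply: eq0_norm_small => eta eta0.
have [a [C [C0 eC]]] := in_dual_bound p_seminorm (B_dual Be).
have [c c0 cball] := interpolant_bound n0.
have eta2 : 0 < eta / 2 by rewrite divr_gt0.
have [N1 vN1] := vlim a (eta / 2 / C) (divr_gt0 eta2 C0).
have [N2 cN2] := inv_succ_small k c0 eta2.
pose n := maxn N1 N2.
apply: le_trans (ler_distD (e (g_comb (D n))) _ _) _; rewrite [leRHS](splitr eta) lerD //.
  rewrite distrC -(in_dualB (B_dual Be)); apply: le_trans (eC _) _.
  apply: le_trans (ler_wpM2l (ltW C0) (vN1 n _)) _; first by rewrite leq_maxl.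
  by rewrite mulrC divfK ?gt_eqF.
apply: le_trans (g_comb_error n Be Ff fe c0 (cball e f Be Ff fe)) _.
by apply: cN2; rewrite leq_maxr.
Qed.

End Limit.

Lemma represents_exists y : dualW y -> exists v, represents y v.
Proof.
move=> yW; have approx n : exists ds : seq (K * {m : M & om m}),
    (forall cmx, List.In cmx ds -> U cmx.2) /\
    forall f, ball f -> `|y f - pt_comb ds f| <= n.+1%:R^-1.
  have [|ds dsU ds_approx] := approx_by_point_functionals yW (eps := n.+1%:R^-1).
    by rewrite invr_gt0 ltr0Sn.
  by exists ds.
have [D DU_approx] := choice approx.
exact: (g_comb_limit_represents yW (fun n => (DU_approx n).1) (fun n => (DU_approx n).2)).
Qed.

Definition preimage (y : X -> K) : E :=
  if pselect (exists v, represents y v) is left yv then projT1 (cid yv) else 0.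

Lemma preimage_represents y : (exists v, represents y v) -> represents y (preimage y).
Proof. by rewrite /preimage; case: pselect => // yv _; apply: (projT2 (cid yv)). Qed.

Lemma ballV_absconvex : absconvex ball.
Proof.
move=> a b f h ab [Ff fV1] [Fh hV1]; split; first exact: (FVs_comb linK nuV_ge0 a b Ff Fh).
apply: (sle_le (sle_comb linK nuV_ge0 a b Ff Fh fV1 hV1)).
by rewrite !mulr1.
Qed.

Lemma preimage_eps_prod : eps_prod emb domK TK MlW M0W nuW p preimage.
Proof.
split=> [c y1 y2 y1W y2W|a].
  have rep1 := preimage_represents (represents_exists y1W).
  have rep2 := preimage_represents (represents_exists y2W).
  have rep : represents (fun f => c * y1 f + y2 f) (c *: preimage y1 + preimage y2).
    by move=> n e f Be Ff fe; rewrite (in_dual_lincomb (B_dual Be)) (rep1 n e f) // (rep2 n e f).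
  apply: (represents_unique (preimage_represents _) rep).
  by exists (c *: preimage y1 + preimage y2).
have [_ _ _ Bfix] := B_fixes; have [n0 Bn0] := Bfix a 1 ltr01.
have [c c0 cball] := interpolant_bound n0.
exists (scaleset c ball); split.
- exact: (compact_FV_scale linK nuW_ge0 (lt0r_neq0 c0) ball_compact).
- exact: absconvex_scale ballV_absconvex.
- move=> y yW y_le1; apply: Bn0 => e Be; have [f Ff fe] := interpolant_exists Be.
  rewrite (preimage_represents (represents_exists yW) Be Ff fe).
  apply: y_le1; exists (fun x => c^-1 * f x); first exact: (cball e f Be Ff fe).
  exact: scale_unscale (lt0r_neq0 c0).
Qed.

Lemma preimage_bounded_on_polar :
  bounded_in_E p (preimage @` polar_ballV emb domK TK MV M0V nuV MlW M0W nuW).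
Proof.
move=> a; have [_ _ _ Bfix] := B_fixes; have [n0 Bn0] := Bfix a 1 ltr01.
have [c c0 cball] := interpolant_bound n0.
exists c => _ [y [yW y_le1] <-]; have [_ _ pZ] := p_seminorm a.
have : p a (c^-1 *: preimage y) <= 1.
  apply: Bn0 => e Be; have [f Ff fe] := interpolant_exists Be.
  rewrite (in_dualZ (B_dual Be)) (preimage_represents (represents_exists yW) Be Ff fe).
  by rewrite -(dualZ linK yW _ (FV_FW Ff)); apply: y_le1; exact: (cball e f Be Ff fe).
rewrite pZ ger0_norm; last by rewrite invr_ge0 ltW.
by rewrite -(ler_pM2l c0) mulrA divff ?gt_eqF // mul1r mulr1.
Qed.

Variables (domE : M -> set (Om -> E)) (TE : forall m, (Om -> E) -> om m -> E).
Hypothesis TK_consistent : consistent_for emb p domE TE domK TK MlW M0W nuW.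

Lemma preimage_interpolates_g m (x : om m) :
  U (existT _ m x) -> @TE m (Smap preimage) x = g (existT _ m x).
Proof.
move=> Umx; have [_ _ ->] := TK_consistent preimage_eps_prod x.
have rep_g : represents (fun f => @TK m f x) (g (existT _ m x)).
  by move=> n e f Be Ff fe; rewrite fe.
by apply: (represents_unique (preimage_represents _) rep_g); exists (g (existT _ m x)).
Qed.

Lemma restriction_surjective : exists u0 : (X -> K) -> E,
  [/\ eps_prod emb domK TK MlW M0W nuW p u0,
      bounded_in_E p (u0 @` polar_ballV emb domK TK MV M0V nuV MlW M0W nuW) &
      forall m (x : om m), U (existT _ m x) -> @TE m (Smap u0) x = g (existT _ m x)].
Proof.
exists preimage; split; first exact: preimage_eps_prod.
  exact: preimage_bounded_on_polar.
exact: preimage_interpolates_g.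
Qed.

End Construction.
End Approximation.

Lemma eps_prod0 (K : numFieldType) (Om M : Type) (om : M -> Type) (emb : forall m, Om -> om m)
    (domK : M -> set (Om -> K^o)) (TK : forall m, (Om -> K^o) -> om m -> K^o)
    (J L : Type) (Ml : L -> set M) (M0 : set M) (nu : J -> L -> M -> Om -> K)
    (E : lmodType K) (A : Type) (p : A -> E -> K) :
  (forall a, is_seminorm (p a)) -> eps_prod emb domK TK Ml M0 nu p (fun _ => 0).
Proof.
move=> p_seminorm; split=> [c y1 y2 _ _|a]; first by rewrite scaler0 addr0.
exists set0; split=> [|a' b' f g _ []|y _ _]; last by rewrite seminorm0 ?ler01.
by split=> // Os _ _; exists nil.
Qed.

Definition real_structure_R (R : realType) : real_structure R (Kfield R true).
Proof.
refine (@RealStructure R (Kfield R true) idfun idfun 1 _ _ _ _ _ _ _) => //.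
by move=> z; apply: (real_ler_norm (num_real (z : R))).
Defined.

Section ComplexScalars.
Local Open Scope complex_scope.

Definition real_structure_C (R : realType) : real_structure R (Kfield R false).
Proof.
refine (@RealStructure R (Kfield R false) (real_complex R) (@complex.Re R) 'i _ _ _ _ _ _ _) => //.
- by move=> r s; apply: lecR.
- by move=> [a b] [c d].
- by move=> r [a b] /=; rewrite mul0r subr0.
- by move=> z zR; apply: RRe_real.
- move=> z; have /andP [_ Re_le] := normc_ge_Re z.
  exact: le_trans (ler_norm _) Re_le.
- move=> [a b] /= a0 b0; apply/eqP; rewrite eq_complex /= a0 eqxx /=.
  by move: b0; rewrite a0 mul0r mul1r sub0r => /eqP; rewrite oppr_eq0.
Defined.

End ComplexScalars.

Definition real_structure_K (R : realType) (b : bool) : real_structure R (Kfield R b) :=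
  if b is true then real_structure_R R else real_structure_C R.

Theorem corollary5p6 (R : realType) (b : bool)
  (E : lmodType (Kfield R b)) (A : Type) (p : A -> E -> Kfield R b)
  (B : nat -> set (E -> Kfield R b))
  (Om M : Type) (om : M -> Type) (emb : forall m : M, Om -> om m)
  (domE : M -> set (Om -> E)) (TE : forall m : M, (Om -> E) -> om m -> E)
  (domK : M -> set (Om -> (Kfield R b)^o))
  (TK : forall m : M, (Om -> (Kfield R b)^o) -> om m -> (Kfield R b)^o)
  (MV M0V : set M) (nuV : M -> Om -> Kfield R b)
  (JW LW : Type) (MlW : LW -> set M) (M0W : set M)
  (nuW : JW -> LW -> M -> Om -> Kfield R b)
  (U : set {m : M & om m}) :
  (* E Frechet, (B_n) fixes the topology of E *)
  frechet p ->
  fixes_topology p B ->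
  (* the data of the weighted spaces *)
  inhabited Om -> (forall m, inhabited (om m)) ->
  linear_ops domE TE -> linear_ops domK TK ->
  weights_ok emb (fun _ : unit => MV) M0V (fun _ _ : unit => nuV) ->
  weights_ok emb MlW M0W nuW ->
  (* defining family for (FV, E): FV(Omega), FV(Omega,E) dom-spaces *)
  dom_space_K emb domK TK (fun _ : unit => MV) M0V (fun _ _ : unit => nuV) ->
  wsn_directed emb p domE TE (fun _ : unit => MV) M0V (fun _ _ : unit => nuV) ->
  (* FW(Omega), FW(Omega,E) dom-spaces; strong and consistent for (FW, E) *)
  dom_space_K emb domK TK MlW M0W nuW ->
  wsn_directed emb p domE TE MlW M0W nuW ->
  strong_for emb p domE TE domK TK MlW M0W nuW ->
  consistent_for emb p domE TE domK TK MlW M0W nuW ->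
  (* FV(Omega) Banach, its closed unit ball compact in FW(Omega) *)
  banach_FV emb domK TK (fun _ : unit => MV) M0V (fun _ _ : unit => nuV) tt tt ->
  compact_FV emb domK TK MlW M0W nuW (ballV emb domK TK MV M0V nuV) ->
  (* U set of uniqueness for FV(Omega) *)
  uniqueness_set emb domK TK (fun _ : unit => MV) M0V (fun _ _ : unit => nuV) U ->
  (* surjectivity of R_{U,G} *)
  forall g : {m : M & om m} -> E,
    FVG_sb emb domK TK MV M0V nuV U (span_union B) B g ->
    exists u : ((Om -> (Kfield R b)^o) -> Kfield R b) -> E,
      [/\ eps_prod emb domK TK MlW M0W nuW p u,
          bounded_in_E p (u @` polar_ballV emb domK TK MV M0V nuV MlW M0W nuW) &
          forall m (x : om m), U (existT _ m x) ->
            TE m (Smap u) x = g (existT _ m x)].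
Proof.
(* The unnamed hypotheses only serve to make R_{U,G} well defined. *)
move=> E_frechet B_fixes Om_inh _ _ linK weightsV weightsW _ _ _ _ _ TK_consistent
  FV_banach ball_compact U_uniqueness g g_sb.
have [p_seminorm _ _ _ _] := E_frechet.
(* Consistency yields T_{m,x} in FW(Omega)' along any u of the epsilon-product,
   e.g. the zero map. *)
have TK_dualW m (x : om m) : in_FVdual emb domK TK MlW M0W nuW (fun f => TK m f x).
  by have [_ ? _] := TK_consistent _ (eps_prod0 emb domK TK MlW M0W nuW p_seminorm) m x.
exact: (restriction_surjective (real_structure_K R b) Om_inh linK weightsV weightsW FV_banach
  ball_compact U_uniqueness TK_dualW E_frechet B_fixes g_sb TK_consistent).
Qed.
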